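(* Let $(G,\Phi)$ be a self-similar group with $G$ finitely generated and $(G,\Phi)$ faithful, contracting and self-replicating; let $(G_0,\varphi_1)$ be a standard contracting cover with projection $\pi:G_0\to G$. For $n\ge 0$ let $N_n=\{g\in G_0: vg=v \text{ and } g_v=1\ \forall v\in X^n\}$ (computed in $(G_0,\varphi_1)$), and $G_n=G_0/N_n$. Then $N_0\subseteq N_1\subseteq\cdots$ and $\bigcup_{n\ge 0}N_n=\ker\pi$; consequently the marked groups $(G_n,S)$ converge to $(G,\pi(S))$ in the space of marked groups on $|S|$ generators.
   Context: Self-similar groups: fix $d\ge 2$, $X=\{0,\dots,d-1\}$, $S_d$ the symmetric group of $X$ acting from the right. $G\wr S_d=G^X\rtimes S_d$ with product $((g_x),\tau)((g'_x),\tau')=((g_xg'_{x\tau}),\tau\tau')$. A self-similar group is $(G,\Phi)$ with $\Phi:G\to G\wr S_d$ a homomorphism, $\Phi(g)=((g_x)_x,\tau_g)$; action on finite words $X^*$ and sections: empty word fixed, $(xw)g=(x\tau_g)(w\,g_x)$, $g_\emptyset=g$, $g_{xw}=(g_x)_w$. Faithful: action on $X^*$ faithful. Contracting: there is a finite $\mathcal M$ with $g_v\in\mathcal M$ for all $v$ of length $\ge k(g)$; nucleus $\mathcal N$ = smallest such set. Self-replicating: for all $g$, $x$ there is $h$ with $xh=x$, $h_x=g$. Universal contracting cover: $\mathcal N=\{n_1,\dots,n_\ell\}$, $\Phi(n_i)=((n_{i(x)})_x,\tau_i)$; $S=\{s_1,\dots,s_\ell\}$; relators $s_i$ ($n_i=1$),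 $s_is_j$ ($n_in_j=1$), $s_is_js_k$ ($n_in_jn_k=1$); $G_0^{un}=\langle S\mid R\rangle$, $\pi^{un}(s_i)=n_i$; $\varphi^{un}$ extends $s_i\mapsto((s_{i(x)})_x,\tau_i)$. Standard contracting cover: for $x\in X$, $n_i\in\mathcal N$ choose $g(x,n_i)\in G$ fixing $x$ with $g(x,n_i)_x=n_i$, a lift $h(x,n_i)\in G_0^{un}$, $w(x,n_i)=h(x,n_i)_xs_i^{-1}$, $E=\{w(x,n_i)_v\}$ over all $x,n_i,v\in X^*$, $H$ its normal closure, $G_0=G_0^{un}/H$, with $\pi,\varphi_1$ induced by $\pi^{un},\varphi^{un}$. Marked groups: $\mathcal M_k$ is the set of pairs $(G,S)$ with $S$ an ordered $k$-tuple generating $G$, identified with normal subgroups of the free group $F_k$ (kernels of $F_k\to G$); $(G_n,S_n)\to(G,S)$ means that for every finite $K\subset F_k$, $\ker_n\cap K=\ker\cap K$ for all large $n$. *)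

From mathcomp Require Import all_boot all_order all_fingroup.
From Stdlib Require Import Relation_Operators.
From Stdlib Require List.
Set Implicit Arguments. Unset Strict Implicit. Unset Printing Implicit Defensive.

Local Open Scope group_scope.

Record is_group (G : Type) (mul : G -> G -> G) (one : G) (inv : G -> G) : Prop := {
  mulA : forall a b c, mul a (mul b c) = mul (mul a b) c;
  mul1g : forall a, mul one a = a;
  mulVg : forall a, mul (inv a) a = one }.

Inductive gen (G : Type) (mul : G -> G -> G) (one : G) (inv : G -> G)
    (P : G -> Prop) : G -> Prop :=
| gen_one : gen mul one inv P one
| gen_P g : P g -> gen mul one inv P g
| gen_inv g : gen mul one inv P g -> gen mul one inv P (inv g)
| gen_mul g h : gen mul one inv P g -> gen mul one inv P h ->
                gen mul one inv P (mul g h).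

Definition ss_generates G mul one inv (P : G -> Prop) : Prop :=
  forall g, gen mul one inv P g.

Definition finitely_generated G mul one inv : Prop :=
  exists L : seq G, @ss_generates G mul one inv (fun g => List.In g L).

(* Self-similar groups: Phi(g) = ((sec g x)_x, perm g), X = 'I_d,       *)
(* S_d acting from the right (mathcomp: (s * t) x = t (s x)).          *)
Definition is_self_similar (d : nat) G (mul : G -> G -> G)
    (perm : G -> {perm 'I_d}) (sec : G -> 'I_d -> G) : Prop :=
  forall g h, perm (mul g h) = perm g * perm h /\
    forall x, sec (mul g h) x = mul (sec g x) (sec h (perm g x)).

Fixpoint ss_act (d : nat) G (perm : G -> {perm 'I_d}) (sec : G -> 'I_d -> G)
    (g : G) (v : seq 'I_d) {struct v} : seq 'I_d :=
  match v with
  | [::] => [::]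
  | x :: v' => perm g x :: ss_act perm sec (sec g x) v'
  end.

Fixpoint secv (d : nat) G (sec : G -> 'I_d -> G) (g : G) (v : seq 'I_d)
    {struct v} : G :=
  match v with
  | [::] => g
  | x :: v' => secv sec (sec g x) v'
  end.

Definition ss_faithful (d : nat) G (one : G) perm sec : Prop :=
  forall g : G, (forall v : seq 'I_d, ss_act perm sec g v = v) -> g = one.

Definition contracting_set (d : nat) G (sec : G -> 'I_d -> G) (P : G -> Prop)
  : Prop :=
  forall g, exists k, forall v : seq 'I_d, k <= size v -> P (secv sec g v).

Definition ss_contracting (d : nat) G (sec : G -> 'I_d -> G) : Prop :=
  exists M : seq G, contracting_set sec (fun g => List.In g M).

Definition is_nucleus (d : nat) G (sec : G -> 'I_d -> G) (P : G -> Prop)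
  : Prop :=
  [/\ exists L : seq G, forall g, P g <-> List.In g L,
      contracting_set sec P &
      forall M : seq G, contracting_set sec (fun g => List.In g M) ->
        forall g, P g -> List.In g M].

Definition self_replicating (d : nat) G (perm : G -> {perm 'I_d})
    (sec : G -> 'I_d -> G) : Prop :=
  forall (g : G) (x : 'I_d), exists h, perm h x = x /\ sec h x = g.

(* Words in the free group on S = {s_i | i < l}; (i, false) = s_i,      *)
(* (i, true) = s_i^-1.                                                  *)
Definition word (l : nat) := seq ('I_l * bool).

Definition eval G (mul : G -> G -> G) (one : G) (inv : G -> G) l
    (nuc : 'I_l -> G) (w : word l) : G :=
  foldr (fun a r => mul (if a.2 then inv (nuc a.1) else nuc a.1) r) one w.

(* The group <S | rel>: two words are equal iff related by the
   equivalence closure of inserting a cancelling pair or a relator. *)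
Inductive pstep l (rel : word l -> Prop) : word l -> word l -> Prop :=
| ps_free (u v : word l) a : pstep rel (u ++ v) (u ++ [:: a; (a.1, ~~ a.2)] ++ v)
| ps_rel (u v r : word l) : rel r -> pstep rel (u ++ v) (u ++ r ++ v).

Definition peqv l (rel : word l -> Prop) : word l -> word l -> Prop :=
  clos_refl_sym_trans (word l) (pstep rel).

Definition ptriv l (rel : word l -> Prop) (w : word l) : Prop :=
  peqv rel w [::].

(* Word-level wreath recursion phi^un: s_i |-> ((s_{i(x)})_x, tau_i),
   extended multiplicatively; s_i^-1 |-> ((s_{i(x tau_i^-1)}^-1)_x, tau_i^-1). *)
Section WordRecursion.
Variables (d l : nat) (tau : 'I_l -> {perm 'I_d}) (idx : 'I_l -> 'I_d -> 'I_l).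

Definition lperm (a : 'I_l * bool) : {perm 'I_d} :=
  if a.2 then (tau a.1)^-1 else tau a.1.

Definition lsec (a : 'I_l * bool) (x : 'I_d) : word l :=
  if a.2 then [:: (idx a.1 ((tau a.1)^-1 x), true)] else [:: (idx a.1 x, false)].

Fixpoint wperm (w : word l) : {perm 'I_d} :=
  match w with [::] => 1 | a :: w' => lperm a * wperm w' end.

Fixpoint wsec (w : word l) (x : 'I_d) : word l :=
  match w with [::] => [::] | a :: w' => lsec a x ++ wsec w' (lperm a x) end.

Fixpoint wact (w : word l) (v : seq 'I_d) {struct v} : seq 'I_d :=
  match v with [::] => [::] | x :: v' => wperm w x :: wact (wsec w x) v' end.

Fixpoint wsecv (w : word l) (v : seq 'I_d) {struct v} : word l :=
  match v with [::] => w | x :: v' => wsecv (wsec w x) v' end.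
End WordRecursion.

(* nucleus enumerated as nuc : 'I_l -> G, n_{i(x)} = nuc (idx i x)     *)
Definition cover_rel G (mul : G -> G -> G) (one : G) l (nuc : 'I_l -> G)
    (w : word l) : Prop :=
  (exists i, w = [:: (i, false)] /\ nuc i = one) \/
  (exists i j, w = [:: (i, false); (j, false)] /\ mul (nuc i) (nuc j) = one) \/
  (exists i j k, w = [:: (i, false); (j, false); (k, false)] /\
                 mul (mul (nuc i) (nuc j)) (nuc k) = one).

(* E = { w(x,n_i)_v }, with w(x,n_i) = h(x,n_i)_x s_i^-1, where
   h x i is (a word representing) the lift h(x,n_i) *)
Definition cover_E (d : nat) G (perm : G -> {perm 'I_d}) l (nuc : 'I_l -> G)
    (idx : 'I_l -> 'I_d -> 'I_l) (h : 'I_d -> 'I_l -> word l) (w : word l)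
  : Prop :=
  exists x i v, w = wsecv (fun j => perm (nuc j)) idx
                     (wsec (fun j => perm (nuc j)) idx (h x i) x ++ [:: (i, true)]) v.

Definition G0_rel (d : nat) G (mul : G -> G -> G) (one : G) perm l
    (nuc : 'I_l -> G) idx h (w : word l) : Prop :=
  cover_rel mul one nuc w \/ @cover_E d G perm l nuc idx h w.

(* (preimage in the free group of) N_n =
   {g in G_0 : v g = v and g_v = 1 for all v in X^n}, computed with phi_1 *)
Definition Nn (d : nat) G (mul : G -> G -> G) (one : G) (perm : G -> {perm 'I_d})
    l (nuc : 'I_l -> G) idx h (n : nat) (w : word l) : Prop :=
  forall v : seq 'I_d, size v = n ->
    wact (fun j => perm (nuc j)) idx w v = v /\
    ptriv (@G0_rel d G mul one perm l nuc idx h)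
          (wsecv (fun j => perm (nuc j)) idx w v).

(* The
   proof has four parts.
   1. Evaluation eval : words -> G intertwines the word recursion with Phi,
      every relator evaluates to 1, and the relator set is closed under
      sections; hence pi : G_0 -> G is well defined, and equality in G_0 is a
      congruence preserved by taking sections (phi_1 is well defined).
   2. N_n is increasing, since a section trivial in G_0 has trivial sections,
      and N_n lies in ker pi by faithfulness (pad a word to length n).
   3. G_0 is contracting with nucleus inside S ∪ {1}: for every word w, for
      n large every depth-n section of w equals in G_0 a single positive
      letter or the empty word.  Relators of length 2 and 3 rewrite a product
      of two nucleus letters as one, contraction of G bounds the depth needed
      uniformly over the finitely many pairs, and induction on w concludes.
      If pi(w) = 1 such a section is trivial in G_0 (relator of length 1), so
      ker pi is the union of the N_n, with a threshold depending only on w.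
   4. A finitely generated self-replicating group is generated by any
      contracting set, in particular by its nucleus.
   Convergence of the marked groups (G_n, S) to (G, pi(S)) is the statement
   that on any finite set of words, N_n eventually agrees with ker pi. *)
From Pilot Require Import Defs.
From mathcomp Require Import all_boot all_order all_fingroup.
From Stdlib Require Import Relation_Operators.
From Stdlib Require List.
Set Implicit Arguments. Unset Strict Implicit. Unset Printing Implicit Defensive.

Definition eventually (P : nat -> Prop) : Prop :=
  exists n0, forall n, n0 <= n -> P n.

Lemma eventually_forall_In (T : Type) (P : T -> nat -> Prop) (s : seq T) :
  (forall t, eventually (P t)) ->
  eventually (fun n => forall t, List.In t s -> P t n).
Proof.
move=> ev; elim: s => [|a s [n1 IH]]; first by exists 0.
have [n0 H0] := ev a.
exists (maxn n0 n1) => n; rewrite geq_max => /andP [le0 le1] t /= [<- | ts].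
- exact: H0.
- exact: IH.
Qed.

Lemma mem_In (T : eqType) (s : seq T) (t : T) : t \in s -> List.In t s.
Proof.
elim: s => [//|a s IH]; rewrite inE => /orP [/eqP -> | /IH ts].
- by left.
- by right.
Qed.

Lemma succ_mono (P : nat -> Prop) :
  (forall n, P n -> P n.+1) -> forall n m, n <= m -> P n -> P m.
Proof.
move=> step n m /subnK <-; elim: (m - n) => [//|k IH] /IH.
by rewrite addSn; exact: step.
Qed.

Section WordRecursion.
Variables (d l : nat) (tau : 'I_l -> {perm 'I_d}) (idx : 'I_l -> 'I_d -> 'I_l).

Lemma wsec_cat u v x :
  wsec tau idx (u ++ v) x = wsec tau idx u x ++ wsec tau idx v (wperm tau u x).
Proof.
elim: u x => [|a u IH] x /=; first by rewrite perm1.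
by rewrite IH catA permM.
Qed.

Lemma wsecv_cat w u v : wsecv tau idx w (u ++ v) = wsecv tau idx (wsecv tau idx w u) v.
Proof. by elim: u w => [//|x u IH] w /=; rewrite IH. Qed.

Lemma wact_cat w u v :
  wact tau idx w (u ++ v) = wact tau idx w u ++ wact tau idx (wsecv tau idx w u) v.
Proof. by elim: u w => [//|x u IH] w /=; rewrite IH. Qed.

Lemma wsecv_catw u u' v :
  wsecv tau idx (u ++ u') v = wsecv tau idx u v ++ wsecv tau idx u' (wact tau idx u v).
Proof. by elim: v u u' => [//|x v IH] u u' /=; rewrite wsec_cat IH. Qed.

Lemma wsecv_nil v : wsecv tau idx [::] v = [::].
Proof. by elim: v. Qed.

Lemma size_wact w v : size (wact tau idx w v) = size v.
Proof. by elim: v w => [//|x v IH] w /=; rewrite IH. Qed.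
End WordRecursion.

Section Presentation.
Variables (l : nat) (rel : word l -> Prop).

Lemma peqv_map (l' : nat) (rel' : word l' -> Prop) (f : word l -> word l') :
  (forall u w, pstep rel u w -> peqv rel' (f u) (f w)) ->
  forall u w, peqv rel u w -> peqv rel' (f u) (f w).
Proof.
move=> fstep u w; elim=> {u w} [u w /fstep //|u|u w _ IH|u v w _ IH1 _ IH2].
- exact: rst_refl.
- exact: rst_sym.
- exact: rst_trans IH2.
Qed.

Lemma peqv_invariant (T : Type) (f : word l -> T) :
  (forall u w, pstep rel u w -> f u = f w) ->
  forall u w, peqv rel u w -> f u = f w.
Proof.
move=> fstep u w; elim=> {u w} [u w /fstep //|//|u w _ ->//|u v w _ -> _ ->//].
Qed.

Lemma pstep_ext p q u w : pstep rel u w -> pstep rel (p ++ u ++ q) (p ++ w ++ q).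
Proof.
case=> [u1 v1 a|u1 v1 r hr].
- by have := ps_free rel (p ++ u1) (v1 ++ q) a; rewrite -!catA.
- by have := ps_rel (p ++ u1) (v1 ++ q) hr; rewrite -!catA.
Qed.

Lemma peqv_cat u u' w w' : peqv rel u w -> peqv rel u' w' -> peqv rel (u ++ u') (w ++ w').
Proof.
have ext p q : forall x y, peqv rel x y -> peqv rel (p ++ x ++ q) (p ++ y ++ q).
  by apply: peqv_map => x y s; apply: rst_step; apply: pstep_ext.
move=> e1 e2; apply: (@rst_trans _ _ _ (w ++ u')).
  by have := ext [::] u' _ _ e1.
by have := ext w [::] _ _ e2; rewrite !cats0.
Qed.
End Presentation.

Section SelfSimilarGroup.
Variables (d : nat) (G : Type) (mul : G -> G -> G) (one : G) (inv : G -> G).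
Hypothesis hG : is_group mul one inv.

Lemma grp_mulA a b c : mul a (mul b c) = mul (mul a b) c.
Proof. exact: (Defs.mulA hG). Qed.

Lemma grp_mul1 a : mul one a = a.
Proof. exact: (Defs.mul1g hG). Qed.

Lemma grp_mulV a : mul (inv a) a = one.
Proof. exact: (Defs.mulVg hG). Qed.

Lemma grp_mulVr a : mul a (inv a) = one.
Proof.
set b := mul a (inv a).
have e : mul (inv a) b = inv a by rewrite /b grp_mulA grp_mulV grp_mul1.
by rewrite -[b]grp_mul1 -(grp_mulV (inv a)) -grp_mulA e grp_mulV.
Qed.

Lemma grp_mulr1 a : mul a one = a.
Proof. by rewrite -(grp_mulV a) grp_mulA grp_mulVr grp_mul1. Qed.

Lemma grp_inv_uniqr a b : mul a b = one -> b = inv a.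
Proof. by move=> e; rewrite -[b]grp_mul1 -(grp_mulV a) -grp_mulA e grp_mulr1. Qed.

Lemma grp_inv_uniql a b : mul a b = one -> a = inv b.
Proof. by move=> e; rewrite -[a]grp_mulr1 -(grp_mulVr b) grp_mulA e grp_mul1. Qed.

Lemma grp_invK a : inv (inv a) = a.
Proof. by symmetry; apply: grp_inv_uniqr; apply: grp_mulV. Qed.

Lemma grp_idem a : mul a a = a -> a = one.
Proof.
by move=> e; have := congr1 (mul (inv a)) e; rewrite grp_mulA grp_mulV grp_mul1.
Qed.

Variables (perm : G -> {perm 'I_d}) (sec : G -> 'I_d -> G).
Hypothesis hSS : is_self_similar mul perm sec.

Lemma perm_mul g h : perm (mul g h) = (perm g * perm h)%g.
Proof. by case: (hSS g h). Qed.

Lemma sec_mul g h x : sec (mul g h) x = mul (sec g x) (sec h (perm g x)).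
Proof. by case: (hSS g h). Qed.

Lemma perm_one : perm one = 1%g.
Proof.
have e := perm_mul one one; rewrite grp_mul1 in e.
by apply: (mulgI (perm one)); rewrite mulg1 -e.
Qed.

Lemma sec_one x : sec one x = one.
Proof.
have e := sec_mul one one x; rewrite grp_mul1 perm_one perm1 in e.
by apply: grp_idem; rewrite -e.
Qed.

Lemma perm_inv g : perm (inv g) = ((perm g)^-1)%g.
Proof.
have e := perm_mul (inv g) g; rewrite grp_mulV perm_one in e.
by apply: (mulIg (perm g)); rewrite mulVg -e.
Qed.

Lemma sec_inv g x : sec (inv g) x = inv (sec g (((perm g)^-1)%g x)).
Proof.
have e := sec_mul (inv g) g x; rewrite grp_mulV sec_one perm_inv in e.
by apply: grp_inv_uniql; rewrite -e.
Qed.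

Lemma ss_act_one v : ss_act perm sec one v = v.
Proof. by elim: v => [//|x v IH] /=; rewrite perm_one perm1 sec_one IH. Qed.

Lemma size_ss_act g v : size (ss_act perm sec g v) = size v.
Proof. by elim: v g => [//|x v IH] g /=; rewrite IH. Qed.

Lemma ss_act_cat g u v :
  ss_act perm sec g (u ++ v) = ss_act perm sec g u ++ ss_act perm sec (secv sec g u) v.
Proof. by elim: u g => [//|x u IH] g /=; rewrite IH. Qed.

Lemma secv_one v : secv sec one v = one.
Proof. by elim: v => [//|x v IH] /=; rewrite sec_one IH. Qed.

Lemma secv_mul g h v :
  secv sec (mul g h) v = mul (secv sec g v) (secv sec h (ss_act perm sec g v)).
Proof. by elim: v g h => [//|x v IH] g h /=; rewrite sec_mul IH. Qed.

Lemma secv_inv g v : secv sec g v = inv (secv sec (inv g) (ss_act perm sec g v)).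
Proof. by apply: grp_inv_uniql; rewrite -secv_mul grp_mulVr secv_one. Qed.

(* Part 4: a finitely generated self-replicating group is generated by any
   contracting set, since every element is a deep section of some element. *)
Section Generation.
Hypothesis hrep : self_replicating perm sec.

Lemma secv_surjective v g : exists h, secv sec h v = g.
Proof.
elim: v g => [|x v IH] g; first by exists g.
have [h' e'] := IH g; have [h [_ e]] := hrep h' x.
by exists h => /=; rewrite e.
Qed.

Variable P : G -> Prop.

Lemma gen_secv (L : seq G) n :
  (forall s, List.In s L -> forall v, size v = n -> P (secv sec s v)) ->
  forall g, gen mul one inv (fun g => List.In g L) g ->
  forall v, size v = n -> gen mul one inv P (secv sec g v).
Proof.
move=> HL g; elim=> {g} [|s sL|g _ IH|g1 g2 _ IH1 _ IH2] v sv.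
- rewrite secv_one; exact: gen_one.
- exact: gen_P (HL s sL v sv).
- rewrite secv_inv grp_invK; apply: gen_inv; apply: IH.
  by rewrite size_ss_act.
- rewrite secv_mul; apply: gen_mul; first exact: IH1.
  by apply: IH2; rewrite size_ss_act.
Qed.

Lemma contracting_generates : 0 < d -> finitely_generated mul one inv ->
  contracting_set sec P -> ss_generates mul one inv P.
Proof.
move=> hd0 [L hL] hP.
have [n Hn] : eventually (fun n =>
    forall s, List.In s L -> forall v, size v = n -> P (secv sec s v)).
  apply: eventually_forall_In => s; have [k hk] := hP s.
  by exists k => n kn v sv; apply: hk; rewrite sv.
move=> g; have [h0 <-] := secv_surjective (nseq n (Ordinal hd0)) g.
by apply: (gen_secv (Hn n (leqnn n))) (hL h0) _ _; rewrite size_nseq.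
Qed.
End Generation.

Section NucleusWords.
Variables (l : nat) (nuc : 'I_l -> G) (idx : 'I_l -> 'I_d -> 'I_l).
Hypothesis hidx : forall i x, sec (nuc i) x = nuc (idx i x).

Local Notation tau := (fun j => perm (nuc j)).
Local Notation E := (eval mul one inv nuc).

Definition letter (a : 'I_l * bool) : G := if a.2 then inv (nuc a.1) else nuc a.1.

Lemma eval_cat u v : E (u ++ v) = mul (E u) (E v).
Proof.
elim: u => [|a u IH] /=; first by rewrite grp_mul1.
by rewrite IH grp_mulA.
Qed.

Lemma lperm_eval a : lperm tau a = perm (letter a).
Proof. by case: a => i [] //=; rewrite /letter /= perm_inv. Qed.

Lemma lsec_eval a x : E (lsec tau idx a x) = sec (letter a) x.
Proof. by case: a => i [] /=; rewrite /letter /= grp_mulr1 ?sec_inv hidx. Qed.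

Lemma wperm_eval w : wperm tau w = perm (E w).
Proof.
elim: w => [|a w IH] /=; first by rewrite perm_one.
by rewrite IH lperm_eval perm_mul.
Qed.

Lemma wsec_eval w x : E (wsec tau idx w x) = sec (E w) x.
Proof.
elim: w x => [|a w IH] x /=; first by rewrite sec_one.
by rewrite eval_cat IH lsec_eval lperm_eval -sec_mul.
Qed.

Lemma wact_eval w v : wact tau idx w v = ss_act perm sec (E w) v.
Proof. by elim: v w => [//|x v IH] w /=; rewrite IH wperm_eval wsec_eval. Qed.

Lemma wsecv_eval w v : E (wsecv tau idx w v) = secv sec (E w) v.
Proof. by elim: v w => [//|x v IH] w /=; rewrite IH wsec_eval. Qed.

Section StandardCover.
(* Only the section property of the lifts h(x, n_i) is needed here. *)
Variable h : 'I_d -> 'I_l -> word l.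
Hypothesis hh_sec : forall x i, sec (E (h x i)) x = nuc i.

Local Notation rel := (G0_rel mul one perm nuc idx h).
Local Notation N := (Nn mul one perm nuc idx h).

Lemma relator_eval r : rel r -> E r = one.
Proof.
case=> [[[i [-> e]]|[[i [j [-> e]]]|[i [j [k [-> e]]]]]]|[x [i [v ->]]]] /=.
- by rewrite grp_mulr1.
- by rewrite grp_mulr1.
- by rewrite grp_mulr1 grp_mulA.
rewrite wsecv_eval eval_cat wsec_eval hh_sec /=.
by rewrite grp_mulr1 grp_mulVr secv_one.
Qed.

Lemma cancel_pair_eval (a : 'I_l * bool) : E [:: a; (a.1, ~~ a.2)] = one.
Proof. by case: a => i [] /=; rewrite grp_mulr1 ?grp_mulV ?grp_mulVr. Qed.

Lemma peqv_eval u w : peqv rel u w -> E u = E w.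
Proof.
apply: (peqv_invariant (f := E)) => {u w} _ _ [u v a|u v r hr]; rewrite !eval_cat.
- by rewrite cancel_pair_eval grp_mul1.
- by rewrite (relator_eval hr) grp_mul1.
Qed.

Lemma relator_wsec r x : rel r -> rel (wsec tau idx r x).
Proof.
case=> [[[i [-> e]]|[[i [j [-> e]]]|[i [j [k [-> e]]]]]]|[y [i [v ->]]]] /=.
- left; left; exists (idx i x); split => //.
  by rewrite -hidx e sec_one.
- left; right; left; exists (idx i x), (idx j (perm (nuc i) x)); split => //.
  by rewrite -!hidx -sec_mul e sec_one.
- left; right; right; exists (idx i x), (idx j (perm (nuc i) x)),
    (idx k (perm (nuc j) (perm (nuc i) x))); split => //.
  rewrite -!hidx -sec_mul -(permM (perm (nuc i)) (perm (nuc j))) -perm_mul.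
  by rewrite -sec_mul e sec_one.
right; exists y, i, (v ++ [:: x]).
by rewrite wsecv_cat.
Qed.

Lemma wsec_trivial_mid u m v x : E m = one ->
  wsec tau idx (u ++ m ++ v) x =
  wsec tau idx u x ++ wsec tau idx m (wperm tau u x) ++ wsec tau idx v (wperm tau u x).
Proof. by move=> em; rewrite !wsec_cat (wperm_eval m) em perm_one perm1. Qed.

Lemma peqv_wsec u w x : peqv rel u w -> peqv rel (wsec tau idx u x) (wsec tau idx w x).
Proof.
apply: (peqv_map (f := fun y => wsec tau idx y x)) => {u w} _ _ [u v a|u v r hr].
- rewrite wsec_trivial_mid ?cancel_pair_eval // wsec_cat.
  apply: rst_step; case: a => i [] /=.
  + by rewrite /lperm /=; exact: (ps_free _ _ _ (_, true)).
  + by rewrite /lperm /= permK; exact: (ps_free _ _ _ (_, false)).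
- rewrite wsec_trivial_mid ?(relator_eval hr) // wsec_cat.
  by apply: rst_step; apply: ps_rel; apply: relator_wsec.
Qed.

Lemma peqv_wsecv u w v : peqv rel u w -> peqv rel (wsecv tau idx u v) (wsecv tau idx w v).
Proof. by elim: v u w => [//|x v IH] u w e /=; apply: IH; exact: peqv_wsec. Qed.

Lemma Nn_succ n w : N n w -> N n.+1 w.
Proof.
move=> H v; case/lastP: v => [//|v x]; rewrite size_rcons => -[sv].
have [ea et] := H v sv.
rewrite -cats1 wact_cat wsecv_cat ea /=; split.
  by rewrite wperm_eval (peqv_eval et) /= perm_one perm1.
exact: (peqv_wsec x et).
Qed.

Lemma Nn_eval : 0 < d -> ss_faithful one perm sec -> forall n w, N n w -> E w = one.
Proof.
move=> hd0 hfaith n w H; apply: hfaith => v.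
pose u := v ++ nseq (n - size v) (Ordinal hd0).
have hu : ss_act perm sec (E w) u = u.
  have su : n <= size u by rewrite size_cat size_nseq -leq_subLR.
  rewrite -(cat_take_drop n u) ss_act_cat.
  have [ea et] := H (take n u) (size_takel su).
  by rewrite -wact_eval ea -wsecv_eval (peqv_eval et) /= ss_act_one.
have := congr1 (take (size v)) hu.
by rewrite /u ss_act_cat !take_size_cat // size_ss_act.
Qed.

Section Contraction.
Hypothesis hnuc : is_nucleus sec (fun g => exists i, nuc i = g).

(* The nucleus is closed under inversion, by minimality. *)
Lemma nucleus_inv_closed i : exists j, nuc j = inv (nuc i).
Proof.
case: hnuc => [[L hL] hc hmin].
have hM : contracting_set sec (fun g => List.In g (map inv L)).
  move=> g; have [k hk] := hc (inv g); exists k => v sv.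
  rewrite secv_inv; apply: List.in_map; apply/hL.
  by apply: hk; rewrite size_ss_act.
have /List.in_map_iff [y [ey yL]] := hmin _ hM (nuc i) (ex_intro _ i erefl).
have [j ej] := (proj2 (hL y)) yL.
by exists j; rewrite ej -ey grp_invK.
Qed.

Lemma relator1 i : nuc i = one -> rel [:: (i, false)].
Proof. by move=> e; left; left; exists i. Qed.

Lemma relator2 i j : mul (nuc i) (nuc j) = one -> rel [:: (i, false); (j, false)].
Proof. by move=> e; left; right; left; exists i, j. Qed.

Lemma relator3 i j k : mul (mul (nuc i) (nuc j)) (nuc k) = one ->
  rel [:: (i, false); (j, false); (k, false)].
Proof. by move=> e; left; right; right; exists i, j, k. Qed.

Definition short_word (o : option 'I_l) : word l :=
  if o is Some i then [:: (i, false)] else [::].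

Lemma wsecv_short_word o v : exists o', wsecv tau idx (short_word o) v = short_word o'.
Proof.
elim: v o => [|x v IH] [i|]; try by [exists (Some i) | exists None].
- exact: IH (Some (idx i x)).
- exact: IH None.
Qed.

Definition nuclear_at (u : word l) (n : nat) : Prop :=
  forall v : seq 'I_d, size v = n ->
    exists o, peqv rel (wsecv tau idx u v) (short_word o).

Lemma nuclear_succ u n : nuclear_at u n -> nuclear_at u n.+1.
Proof.
move=> H v; case/lastP: v => [//|v x]; rewrite size_rcons => -[sv].
have [o e] := H v sv; have [o' e'] := wsecv_short_word o [:: x].
by exists o'; rewrite -cats1 wsecv_cat -e'; exact: peqv_wsecv.
Qed.

Lemma nuclear_mono u n m : n <= m -> nuclear_at u n -> nuclear_at u m.
Proof. exact: (succ_mono (@nuclear_succ u)). Qed.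

Lemma nuclear_nil : nuclear_at [::] 0.
Proof. by move=> v _; exists None; rewrite wsecv_nil; apply: rst_refl. Qed.

(* s_i^-1 equals the letter of the nucleus element n_i^-1. *)
Lemma nuclear_letter a : nuclear_at [:: a] 0.
Proof.
move=> v /size0nil -> /=; case: a => i []; last by exists (Some i); apply: rst_refl.
have [j ej] := nucleus_inv_closed i; exists (Some j) => /=.
apply: (@rst_trans _ _ _ [:: (i, true); (i, false); (j, false)]).
  apply: rst_step; apply: (@ps_rel _ _ [:: (i, true)] [::] [:: (i, false); (j, false)]).
  by apply: relator2; rewrite ej grp_mulVr.
by apply: rst_sym; apply: rst_step; exact: (ps_free _ [::] [:: (j, false)] (i, true)).
Qed.

Lemma nucleus_product_letter a b c : mul (nuc a) (nuc b) = nuc c ->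
  peqv rel [:: (a, false); (b, false)] [:: (c, false)].
Proof.
move=> e; have [c' ec'] := nucleus_inv_closed c.
apply: (@rst_trans _ _ _ [:: (a, false); (b, false); (c', false); (c, false)]).
  apply: rst_step.
  apply: (@ps_rel _ _ [:: (a, false); (b, false)] [::] [:: (c', false); (c, false)]).
  by apply: relator2; rewrite ec' grp_mulV.
apply: rst_sym; apply: rst_step.
apply: (@ps_rel _ _ [::] [:: (c, false)] [:: (a, false); (b, false); (c', false)]).
by apply: relator3; rewrite e ec' grp_mulVr.
Qed.

Lemma wsecv_positive_pair a b v : exists a' b',
  wsecv tau idx [:: (a, false); (b, false)] v = [:: (a', false); (b', false)].
Proof. by elim: v a b => [|x v IH] a b; [exists a, b | apply: IH]. Qed.

(* Uniformly over the finitely many pairs, deep sections of a product of two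
   nucleus elements lie in the nucleus. *)
Lemma pair_products_contract : exists K, forall a b v, size v = K ->
  exists c, nuc c = secv sec (mul (nuc a) (nuc b)) v.
Proof.
case: hnuc => [_ hc _].
have [K HK] : eventually (fun n => forall p, List.In p (enum {: 'I_l * 'I_l}) ->
    forall v, size v = n -> exists c, nuc c = secv sec (mul (nuc p.1) (nuc p.2)) v).
  apply: eventually_forall_In => p; have [k hk] := hc (mul (nuc p.1) (nuc p.2)).
  by exists k => n kn v sv; apply: hk; rewrite sv.
exists K => a b; apply: (HK K (leqnn K) (a, b)).
by apply: mem_In; rewrite mem_enum.
Qed.

Lemma nuclear_cat u u' n1 n2 : nuclear_at u n1 -> nuclear_at u' n2 ->
  exists n, nuclear_at (u ++ u') n.
Proof.
have [K hK] := pair_products_contract.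
move=> R1 R2; set m := maxn n1 n2; exists (m + K) => v sv.
have s1 : size (take m v) = m by rewrite size_takel // sv leq_addr.
have s2 : size (drop m v) = K by rewrite size_drop sv addKn.
have [o1 e1] := nuclear_mono (leq_maxl n1 n2) R1 s1.
have [o2 e2] := nuclear_mono (leq_maxr n1 n2) R2 (etrans (size_wact tau idx u _) s1).
rewrite -(cat_take_drop m v) wsecv_cat wsecv_catw.
have e3 := peqv_wsecv (drop m v) (peqv_cat e1 e2).
case: o1 e1 e3 => [a|] e1 e3; last first.
  by have [o' eo] := wsecv_short_word o2 (drop m v); exists o'; rewrite -eo.
case: o2 e2 e3 => [b|] e2 e3; last first.
  have [o' eo] := wsecv_short_word (Some a) (drop m v).
  by exists o'; rewrite -eo -[short_word (Some a)]cats0.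
have [a' [b' eab]] := wsecv_positive_pair a b (drop m v).
have [c ec] := hK a b (drop m v) s2.
exists (Some c); apply: (rst_trans _ _ _ _ _ e3).
rewrite /= eab; apply: nucleus_product_letter.
have := wsecv_eval [:: (a, false); (b, false)] (drop m v).
by rewrite eab /= !grp_mulr1 ec.
Qed.

Lemma nuclear_eventually w : exists n, nuclear_at w n.
Proof.
elim: w => [|a w [n IH]]; first by exists 0; apply: nuclear_nil.
exact: (nuclear_cat (nuclear_letter a) IH).
Qed.

(* Once all depth-n sections are short, an element of ker pi lies in N_n:
   a short word of value 1 is trivial in G_0. *)
Lemma Nn_of_nuclear w n : nuclear_at w n -> E w = one -> N n w.
Proof.
move=> R ew v sv; split; first by rewrite wact_eval ew ss_act_one.
have [o e] := R v sv.
have eo := peqv_eval e; rewrite wsecv_eval ew secv_one in eo.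
apply: (rst_trans _ _ _ _ _ e); case: o e eo => [c|] e eo /=; last exact: rst_refl.
rewrite /= grp_mulr1 in eo.
apply: rst_sym; apply: rst_step; apply: (@ps_rel _ _ [::] [::] [:: (c, false)]).
exact: relator1.
Qed.

Lemma Nn_eventually_kernel : 0 < d -> ss_faithful one perm sec ->
  forall w, eventually (fun n => N n w <-> E w = one).
Proof.
move=> hd0 hfaith w; have [n0 Hn0] := nuclear_eventually w.
exists n0 => n le; split; first exact: Nn_eval.
exact: Nn_of_nuclear (nuclear_mono le Hn0).
Qed.
End Contraction.
End StandardCover.
End NucleusWords.
End SelfSimilarGroup.

Theorem mainTheorem4
  (d : nat) (hd : 2 <= d)
  (G : Type) (mul : G -> G -> G) (one : G) (inv : G -> G)
  (hG : is_group mul one inv)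
  (perm : G -> {perm 'I_d}) (sec : G -> 'I_d -> G)
  (hSS : is_self_similar mul perm sec)
  (hfg : finitely_generated mul one inv)
  (hfaith : ss_faithful one perm sec)
  (hcontr : ss_contracting sec)
  (hrep : self_replicating perm sec)
  (l : nat) (nuc : 'I_l -> G) (hnuc_inj : injective nuc)
  (hnuc : is_nucleus sec (fun g => exists i, nuc i = g))
  (idx : 'I_l -> 'I_d -> 'I_l)
  (hidx : forall i x, sec (nuc i) x = nuc (idx i x))
  (h : 'I_d -> 'I_l -> word l)
  (hh : forall x i, perm (eval mul one inv nuc (h x i)) x = x /\
                    sec (eval mul one inv nuc (h x i)) x = nuc i) :
  let N := Nn mul one perm nuc idx h in
  [/\ (forall n w, N n w -> N n.+1 w),
      (forall w, (exists n, N n w) <-> eval mul one inv nuc w = one),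
      ss_generates mul one inv (fun g => exists i, nuc i = g) &
      (forall K : seq (word l), exists n0, forall n, n0 <= n ->
         forall w, w \in K -> (N n w <-> eval mul one inv nuc w = one))].
Proof.
move=> N; rewrite {}/N; have hd0 : 0 < d := ltnW hd.
have hh_sec x i := proj2 (hh x i).
have kernel := Nn_eventually_kernel hG hSS hidx hh_sec hnuc hd0 hfaith.
split.
- exact: (Nn_succ hG hSS hidx hh_sec).
- move=> w; split => [[n]|ew]; first exact: (Nn_eval hG hSS hidx hh_sec hd0 hfaith).
  by have [n0 Hn0] := kernel w; exists n0; apply/(Hn0 n0 (leqnn n0)).
- by case: hnuc => [_ hc _]; exact: (contracting_generates hG hSS hrep hd0 hfg hc).
- move=> K; have [n0 Hn0] := eventually_forall_In K kernel.
  by exists n0 => n le w /mem_In; exact: Hn0.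
Qed.
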